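(* Let $H_1,H_2$ be $r\times n$ matrices of rank $r$ over $\mathbb{F}_q$. Let $m$ be the number of pairs $(U,P)$ with $U\in\mathrm{GL}_r(\mathbb{F}_q)$ and $P$ an $n\times n$ permutation matrix such that $UH_2=H_1P$, let $m_u$ be the number of distinct $U$ occurring in such pairs and $m_p$ the number of distinct $P$ occurring in such pairs. Then for a fixed $U$ with $(U,P_1)$ such a pair, $(U,P_2)$ is also such a pair if and only if $P_2$ lies in the same right coset of $\mathrm{Sym}(H_1)$ as $P_1$. Consequently $m_p=m=m_u\,|\mathrm{Sym}(H_1)|$.
   Context: $\mathrm{Sym}(H_1)=\{P\in S_n: H_1P=H_1\}$ is the subgroup of permutation matrices leaving $H_1$ unchanged under column permutation. *)

From mathcomp Require Import all_boot all_order all_algebra all_fingroup.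
Set Implicit Arguments. Unset Strict Implicit. Unset Printing Implicit Defensive.
Import GRing.Theory.
Local Open Scope ring_scope.

Definition is_pair (F : finFieldType) (r n : nat) (H1 H2 : 'M[F]_(r, n))
  (U : 'M[F]_r) (P : 'M[F]_n) : bool :=
  [&& U \in unitmx, is_perm_mx P & U *m H2 == H1 *m P].

Definition SymH (F : finFieldType) (r n : nat) (H1 : 'M[F]_(r, n)) : {set 'M[F]_n} :=
  [set P : 'M[F]_n | is_perm_mx P && (H1 *m P == H1)].

Definition Sym_rcoset (F : finFieldType) (r n : nat) (H1 : 'M[F]_(r, n))
  (P1 : 'M[F]_n) : {set 'M[F]_n} :=
  [set S *m P1 | S in SymH H1].

Definition m_pairs (F : finFieldType) (r n : nat) (H1 H2 : 'M[F]_(r, n)) : nat :=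
  #|[set x : 'M[F]_r * 'M[F]_n | is_pair H1 H2 x.1 x.2]|.

Definition m_u (F : finFieldType) (r n : nat) (H1 H2 : 'M[F]_(r, n)) : nat :=
  #|[set U : 'M[F]_r | [exists P : 'M[F]_n, is_pair H1 H2 U P]]|.

Definition m_p (F : finFieldType) (r n : nat) (H1 H2 : 'M[F]_(r, n)) : nat :=
  #|[set P : 'M[F]_n | [exists U : 'M[F]_r, is_pair H1 H2 U P]]|.

From mathcomp Require Import all_boot all_order all_algebra all_fingroup.
Local Open Scope ring_scope.
Set Implicit Arguments. Unset Strict Implicit.
Import GRing.Theory.

(* If (U, P1) is a pair, then (U, P2) is one exactly when H1 P2 = U H2 = H1 P1,
   i.e. when P2 P1^-1 fixes H1; so the permutations paired with U form a right
   coset of Sym(H1).  Since H2 has full row rank, P determines U through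
   U H2 = H1 P, which gives m_p = m; counting the pairs fibre by fibre over U
   gives m = m_u |Sym(H1)|. *)

Section PermMx.

Variables (R : comUnitRingType) (n : nat).
Implicit Type P : 'M[R]_n.

Lemma is_perm_mx_unit P : is_perm_mx P -> P \in unitmx.
Proof. by case/is_perm_mxP=> s ->; apply: unitmx_perm. Qed.

Lemma is_perm_mx_invmx P : is_perm_mx P -> is_perm_mx (invmx P).
Proof.
case/is_perm_mxP=> s ->; apply/is_perm_mxP; exists s^-1%g.
rewrite -[LHS]mul1mx -perm_mx1 -(mulVg s) perm_mxM -mulmxA.
by rewrite mulmxV ?unitmx_perm // mulmx1.
Qed.

Lemma mulmx_perm_inj m P :
  is_perm_mx P -> injective (mulmx^~ P : 'M[R]_(m, n) -> _).
Proof. by move/is_perm_mx_unit=> uP; apply: can_inj (mulmxK uP). Qed.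

End PermMx.

Lemma card_Sym_rcoset (F : finFieldType) (r n : nat) (H1 : 'M[F]_(r, n)) P :
  is_perm_mx P -> #|Sym_rcoset H1 P| = #|SymH H1|.
Proof. by move=> pP; apply/card_imset/mulmx_perm_inj. Qed.

Section Pairs.

Variables (F : finFieldType) (r n : nat) (H1 H2 : 'M[F]_(r, n)).

Local Notation is_pair := (is_pair H1 H2).

Definition paired_perms (U : 'M[F]_r) : {set 'M[F]_n} := [set P | is_pair U P].

Lemma is_pair_perm U P : is_pair U P -> is_perm_mx P.
Proof. by case/and3P. Qed.

Lemma is_pair_rcosetP U P1 P2 :
  is_pair U P1 -> is_perm_mx P2 -> is_pair U P2 <-> P2 \in Sym_rcoset H1 P1.
Proof.
case/and3P=> uU pP1 /eqP defUH2 pP2; rewrite /is_pair uU pP2 defUH2 /=.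
have uP1 := is_perm_mx_unit pP1.
split=> [/eqP defH1P1 | /imsetP[S]].
  apply/imsetP; exists (P2 *m invmx P1); last by rewrite mulmxKV.
  rewrite inE is_perm_mxMr ?is_perm_mx_invmx // pP2 /=.
  by rewrite mulmxA -defH1P1 mulmxK.
by rewrite inE => /andP[_ /eqP fixS] ->; rewrite mulmxA fixS.
Qed.

Lemma paired_perms_rcoset U P1 :
  is_pair U P1 -> paired_perms U = Sym_rcoset H1 P1.
Proof.
move=> pairP1; apply/setP=> P2; rewrite inE.
apply/idP/idP=> [pairP2 | cosetP2].
  exact/(is_pair_rcosetP pairP1 (is_pair_perm pairP2)).
have pP2 : is_perm_mx P2.
  case/imsetP: cosetP2 => S; rewrite inE => /andP[pS _] ->.
  by rewrite is_perm_mxMl // (is_pair_perm pairP1).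
exact/(is_pair_rcosetP pairP1 pP2).
Qed.

Lemma is_pair_unit_uniq U U' P :
  row_free H2 -> is_pair U P -> is_pair U' P -> U = U'.
Proof.
move=> freeH2 /and3P[_ _ /eqP defUH2] /and3P[_ _ /eqP defU'H2].
by apply: (row_free_inj freeH2); rewrite defUH2 defU'H2.
Qed.

Lemma m_p_pairs : row_free H2 -> m_p H1 H2 = m_pairs H1 H2.
Proof.
move=> freeH2; rewrite /m_p /m_pairs; set pairs := [set x : _ * _ | _].
have -> : [set P : 'M_n | [exists U : 'M_r, is_pair U P]] = snd @: pairs.
  apply/setP=> P; rewrite inE; apply/existsP/imsetP=> [[U pairUP] | [[U Q]]].
    by exists (U, P); rewrite ?inE.
  by rewrite inE => pairUQ ->; exists U.
apply: card_in_imset => -[U P] [U' P']; rewrite !inE /= => pairUP pairU'P' eqP'.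
by rewrite -eqP' in pairU'P' *; rewrite (is_pair_unit_uniq freeH2 pairUP pairU'P').
Qed.

Lemma m_pairs_sum : m_pairs H1 H2 = (\sum_U #|paired_perms U|)%N.
Proof.
rewrite /m_pairs -sum1_card.
under [RHS]eq_bigr do rewrite -sum1_card.
by rewrite pair_big_dep; apply: eq_bigl=> -[U P]; rewrite !inE.
Qed.

Lemma m_pairs_mul : m_pairs H1 H2 = (m_u H1 H2 * #|SymH H1|)%N.
Proof.
rewrite m_pairs_sum /m_u -sum_nat_const; set Us := [set U | _].
rewrite (bigID (mem Us)) /= [X in (_ + X)%N]big1 ?addn0 => [|U]; last first.
  rewrite inE negb_exists => /forallP noP.
  by apply: eq_card0 => P; rewrite !inE (negbTE (noP P)).
apply: eq_bigr=> U; rewrite inE => /existsP[P pairUP].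
by rewrite (paired_perms_rcoset pairUP) card_Sym_rcoset // (is_pair_perm pairUP).
Qed.

End Pairs.

Theorem lemma2 (F : finFieldType) (r n : nat) (H1 H2 : 'M[F]_(r, n)) :
  \rank H1 = r -> \rank H2 = r ->
  (forall (U : 'M[F]_r) (P1 P2 : 'M[F]_n),
      is_pair H1 H2 U P1 -> is_perm_mx P2 ->
      (is_pair H1 H2 U P2 <-> P2 \in Sym_rcoset H1 P1))
  /\ m_p H1 H2 = m_pairs H1 H2
  /\ m_pairs H1 H2 = (m_u H1 H2 * #|SymH H1|)%N.
Proof.
move=> _ rankH2; have freeH2 : row_free H2 by rewrite /row_free rankH2.
split; first exact: is_pair_rcosetP.
by split; [apply: m_p_pairs | apply: m_pairs_mul].
Qed.
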